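(* Let $\Omega$, $\mathbf{y}$, $Q$, $\hat{\mathbf{Y}}$, $\mathcal{M}(\mathbf{y},\hat{\mathbf{y}})$, $\mathbf{M}$, $E_m$, $f_L$ be as in the context, let $s>0$, and let $\sigma:\Omega\to(0,1)$ be arbitrary. Let $m^*\in\mathbf{M}$ be a minimizer over $\mathbf{M}$ of $$G(m)=\sum_{(\mathbf{p},\mathbf{q})\in E_m}\Big[\frac{\|\mathbf{p}-\mathbf{q}\|^2}{2s^2}+\log(1-\sigma(\mathbf{p}))-\log\sigma(\mathbf{p})\Big].$$ Then $\hat{\mathbf{y}}^*:=f_L(\mathbf{y},m^* )$ is a minimizer over $\hat{\mathbf{Y}}$ of $$F(\hat{\mathbf{y}})=\min_{m\in\mathcal{M}(\mathbf{y},\hat{\mathbf{y}})}\sum_{(\mathbf{p},\mathbf{q})\in E_m}\frac{\|\mathbf{p}-\mathbf{q}\|^2}{2s^2}\;-\;\sum_{\mathbf{p}\in\Omega}\Big[\hat{y}_{\mathbf{p}}\log\sigma(\mathbf{p})+(1-\hat{y}_{\mathbf{p}})\log(1-\sigma(\mathbf{p}))\Big],$$ and moreover $m^*$ attains the minimum $\min_{m\in\mathcal{M}(\mathbf{y},\hat{\mathbf{y}}^* )}\sum_{(\mathbf{p},\mathbf{q})\in E_m}\|\mathbf{p}-\mathbf{q}\|^2/(2s^2)$.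
   Context: $\Omega\subset\mathbb{Z}^2$ is a finite set of pixel locations, $\|\cdot\|$ the Euclidean norm, $\mathbf{y}\in\{0,1\}^{\Omega}$, $Q=\{\mathbf{q}\in\Omega: y_{\mathbf{q}}=1\}$, and for $\mathbf{z}\in\{0,1\}^{\Omega}$, $|\mathbf{z}|$ is the number of pixels with $z_{\mathbf{p}}=1$. $\hat{\mathbf{Y}}=\{\hat{\mathbf{y}}\in\{0,1\}^{\Omega}:|\hat{\mathbf{y}}|=|\mathbf{y}|\}$. For $\hat{\mathbf{y}}\in\hat{\mathbf{Y}}$, $\mathcal{M}(\mathbf{y},\hat{\mathbf{y}})$ is the set of one-to-one maps $m:Q\to\Omega$ with $\hat{y}_{m(\mathbf{q})}=1$ for all $\mathbf{q}\in Q$; $\mathbf{M}=\bigcup_{\hat{\mathbf{y}}\in\hat{\mathbf{Y}}}\mathcal{M}(\mathbf{y},\hat{\mathbf{y}})$. For $m\in\mathbf{M}$, $E_m=\{(m(\mathbf{q}),\mathbf{q}):\mathbf{q}\in Q\}$, and the label realization $f_L(\mathbf{y},m)\in\{0,1\}^{\Omega}$ is the indicator function of the image $m(Q)$. *)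

From Stdlib Require Import Reals ZArith List Bool.
Import ListNotations.
Open Scope R_scope.

Definition pt := (Z * Z)%type.

Definition pt_eqb (p q : pt) : bool := Z.eqb (fst p) (fst q) && Z.eqb (snd p) (snd q).

Definition sumR {A : Type} (l : list A) (f : A -> R) : R :=
  fold_right (fun a acc => f a + acc) 0 l.

Definition sqdist (p q : pt) : R :=
  IZR ((fst p - fst q) * (fst p - fst q) + (snd p - snd q) * (snd p - snd q))%Z.

Definition b2R (b : bool) : R := if b then 1 else 0.

(* A binary image z in {0,1}^Omega is a function pt -> bool (values off Omega
   are irrelevant). |z| = number of pixels of Omega with z_p = 1. *)
Definition card1 (Omega : list pt) (z : pt -> bool) : nat :=
  length (filter z Omega).

Definition Qset (Omega : list pt) (y : pt -> bool) : list pt := filter y Omega.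

Definition inYhat (Omega : list pt) (y yhat : pt -> bool) : Prop :=
  card1 Omega yhat = card1 Omega y.

(* m in M(y, yhat): a one-to-one map Q -> Omega with yhat_{m(q)} = 1
   (represented by a function pt -> pt, only its values on Q matter). *)
Definition inMy (Omega : list pt) (y yhat : pt -> bool) (m : pt -> pt) : Prop :=
  (forall q, In q (Qset Omega y) -> In (m q) Omega /\ yhat (m q) = true) /\
  (forall q1 q2, In q1 (Qset Omega y) -> In q2 (Qset Omega y) -> m q1 = m q2 -> q1 = q2).

Definition inM (Omega : list pt) (y : pt -> bool) (m : pt -> pt) : Prop :=
  exists yhat, inYhat Omega y yhat /\ inMy Omega y yhat m.

Definition fL (Omega : list pt) (y : pt -> bool) (m : pt -> pt) : pt -> bool :=
  fun p => existsb (fun q => pt_eqb (m q) p) (Qset Omega y).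

Definition match_cost (Omega : list pt) (y : pt -> bool) (s : R) (m : pt -> pt) : R :=
  sumR (Qset Omega y) (fun q => sqdist (m q) q / (2 * s ^ 2)).

Definition Gcost (Omega : list pt) (y : pt -> bool) (s : R) (sigma : pt -> R)
  (m : pt -> pt) : R :=
  sumR (Qset Omega y) (fun q =>
    sqdist (m q) q / (2 * s ^ 2) + ln (1 - sigma (m q)) - ln (sigma (m q))).

Definition bce (Omega : list pt) (sigma : pt -> R) (yhat : pt -> bool) : R :=
  - sumR Omega (fun p => b2R (yhat p) * ln (sigma p) + (1 - b2R (yhat p)) * ln (1 - sigma p)).

Definition IsMin (P : R -> Prop) (v : R) : Prop := P v /\ (forall w, P w -> v <= w).

(* Fval ... yhat v  <->  v = F(yhat), where
   F(yhat) = min_{m in M(y,yhat)} match_cost m + bce yhat. *)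
Definition Fval (Omega : list pt) (y : pt -> bool) (s : R) (sigma : pt -> R)
  (yhat : pt -> bool) (v : R) : Prop :=
  IsMin (fun c => exists m, inMy Omega y yhat m /\ c = match_cost Omega y s m)
        (v - bce Omega sigma yhat).

(* The map m |-> f_L(y, m) sends every m in M(y, yhat) to yhat itself on Omega: the image m(Q) is a
   set of |Q| = |yhat| pixels on which yhat = 1, so it is exactly the support of yhat.  Writing
   h(p) = log(1 - sigma p) - log(sigma p), the cross entropy of yhat is the constant
   -sum_Omega log(1 - sigma) plus the sum of h over the support of yhat, i.e. over m(Q).  Hence
   G(m) = cost(m) + bce(yhat) + const for every admissible pair (yhat, m), and minimising G over M
   minimises cost(m) + bce(yhat) jointly, which gives both claims. *)
From Stdlib Require Import Reals ZArith List Bool Permutation Lra.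
Open Scope R_scope.

Lemma pt_eqb_true_iff (p q : pt) : pt_eqb p q = true <-> p = q.
Proof.
  destruct p as [p1 p2], q as [q1 q2]; unfold pt_eqb; simpl.
  rewrite andb_true_iff, !Z.eqb_eq; split.
  - intros [-> ->]; reflexivity.
  - intros E; inversion E; auto.
Qed.

Section FiniteSums.
Context {A : Type}.

Lemma sumR_add (l : list A) (f g : A -> R) :
  sumR l (fun a => f a + g a) = sumR l f + sumR l g.
Proof. induction l as [|a l IH]; simpl; [lra|]. rewrite IH; lra. Qed.

Lemma eq_sumR_in (l : list A) (f g : A -> R) :
  (forall a, In a l -> f a = g a) -> sumR l f = sumR l g.
Proof.
  induction l as [|a l IH]; simpl; intros Efg; [reflexivity|].
  rewrite Efg, IH; auto.
Qed.

Lemma sumR_map {B : Type} (l : list B) (m : B -> A) (h : A -> R) :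
  sumR (map m l) h = sumR l (fun b => h (m b)).
Proof. induction l as [|b l IH]; simpl; [reflexivity|]. rewrite IH; reflexivity. Qed.

Lemma sumR_filter (l : list A) (b : A -> bool) (h : A -> R) :
  sumR l (fun a => if b a then h a else 0) = sumR (filter b l) h.
Proof.
  induction l as [|a l IH]; simpl; [reflexivity|].
  destruct (b a); simpl; rewrite IH; lra.
Qed.

Lemma sumR_perm {l l' : list A} (h : A -> R) :
  Permutation l l' -> sumR l h = sumR l' h.
Proof. induction 1; simpl; lra. Qed.

Lemma filter_eq_of_incl_length (l : list A) (a b : A -> bool) :
  NoDup l ->
  (forall x, In x l -> a x = true -> b x = true) ->
  (length (filter b l) <= length (filter a l))%nat ->
  forall x, In x l -> a x = b x.
Proof.
  intros Hl Hab Hlen x Hx.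
  assert (Hincl : incl (filter b l) (filter a l)).
  { apply NoDup_length_incl; [now apply NoDup_filter | exact Hlen |].
    intros z Hz; apply filter_In in Hz as [Hz Haz]; apply filter_In; auto. }
  destruct (a x) eqn:Ea, (b x) eqn:Eb; auto.
  - rewrite (Hab x Hx Ea) in Eb; discriminate.
  - assert (Hxa : In x (filter a l)) by (apply Hincl, filter_In; auto).
    apply filter_In in Hxa as [_ Ha]; congruence.
Qed.

End FiniteSums.

Lemma bce_support_form (Omega : list pt) (sigma : pt -> R) (yhat : pt -> bool) :
  bce Omega sigma yhat =
  - sumR Omega (fun p => ln (1 - sigma p))
  + sumR Omega (fun p => if yhat p then ln (1 - sigma p) - ln (sigma p) else 0).
Proof.
  unfold bce; induction Omega as [|p Omega IH]; simpl; [lra|].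
  destruct (yhat p); simpl; lra.
Qed.

Section LabelRealization.
Context {Omega : list pt} {y : pt -> bool} (HOmega : NoDup Omega).

Lemma fL_true_iff (m : pt -> pt) (p : pt) :
  fL Omega y m p = true <-> In p (map m (Qset Omega y)).
Proof.
  unfold fL; rewrite existsb_exists, in_map_iff; split.
  - intros [q [Hq E]]; apply pt_eqb_true_iff in E; eauto.
  - intros [q [E Hq]]; exists q; split; [exact Hq | now apply pt_eqb_true_iff].
Qed.

Lemma support_fL_perm {yhat : pt -> bool} {m : pt -> pt} :
  inMy Omega y yhat m -> Permutation (filter (fL Omega y m) Omega) (map m (Qset Omega y)).
Proof.
  intros [Hrange Hinj]; apply NoDup_Permutation.
  - now apply NoDup_filter.
  - apply NoDup_map_NoDup_ForallPairs; [exact Hinj | now apply NoDup_filter].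
  - intros p; rewrite filter_In, fL_true_iff; split; [tauto|].
    intros Hp; split; [|exact Hp].
    apply in_map_iff in Hp as [q [<- Hq]]; apply Hrange, Hq.
Qed.

Lemma card1_fL {yhat : pt -> bool} {m : pt -> pt} :
  inMy Omega y yhat m -> card1 Omega (fL Omega y m) = card1 Omega y.
Proof.
  intros Hm; unfold card1.
  rewrite (Permutation_length (support_fL_perm Hm)), length_map; reflexivity.
Qed.

Lemma inMy_fL {yhat : pt -> bool} {m : pt -> pt} :
  inMy Omega y yhat m -> inMy Omega y (fL Omega y m) m.
Proof.
  intros [Hrange Hinj]; split; [|exact Hinj].
  intros q Hq; split; [apply Hrange, Hq|].
  apply fL_true_iff, in_map; exact Hq.
Qed.

Lemma fL_eq_on_Omega {yhat : pt -> bool} {m : pt -> pt} :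
  inYhat Omega y yhat -> inMy Omega y yhat m ->
  forall p, In p Omega -> fL Omega y m p = yhat p.
Proof.
  intros Hyhat Hm; apply filter_eq_of_incl_length; [exact HOmega | |].
  - intros p _ Hp; apply fL_true_iff, in_map_iff in Hp as [q [<- Hq]].
    apply Hm, Hq.
  - fold (card1 Omega yhat) (card1 Omega (fL Omega y m)).
    rewrite Hyhat, (card1_fL Hm); constructor.
Qed.

Context (s : R) (sigma : pt -> R).

Lemma Gcost_split {yhat : pt -> bool} {m : pt -> pt} :
  inYhat Omega y yhat -> inMy Omega y yhat m ->
  Gcost Omega y s sigma m =
  match_cost Omega y s m + bce Omega sigma yhat + sumR Omega (fun p => ln (1 - sigma p)).
Proof.
  intros Hyhat Hm.
  set (h p := ln (1 - sigma p) - ln (sigma p)).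
  assert (Hbce : bce Omega sigma yhat =
                 - sumR Omega (fun p => ln (1 - sigma p)) + sumR (Qset Omega y) (fun q => h (m q))).
  { rewrite bce_support_form,
      (eq_sumR_in _ (fun p => if yhat p then h p else 0)
                    (fun p => if fL Omega y m p then h p else 0)),
      sumR_filter, (sumR_perm _ (support_fL_perm Hm)), sumR_map; [reflexivity|].
    intros p Hp; rewrite (fL_eq_on_Omega Hyhat Hm p Hp); reflexivity. }
  unfold Gcost, match_cost.
  rewrite (eq_sumR_in _ _ (fun q => sqdist (m q) q / (2 * s ^ 2) + h (m q)))
    by (intros; unfold h; lra).
  rewrite sumR_add, Hbce; lra.
Qed.

End LabelRealization.

Theorem theorem1 (Omega : list pt) (y : pt -> bool) (s : R) (sigma : pt -> R)
  (mstar : pt -> pt)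
  (HOmega : NoDup Omega)
  (Hs : 0 < s)
  (Hsigma : forall p, In p Omega -> 0 < sigma p < 1)
  (Hm_in : inM Omega y mstar)
  (Hm_min : forall m, inM Omega y m -> Gcost Omega y s sigma mstar <= Gcost Omega y s sigma m) :
  let ystar := fL Omega y mstar in
  inYhat Omega y ystar /\
  (exists vstar, Fval Omega y s sigma ystar vstar /\
     forall yhat v, inYhat Omega y yhat -> Fval Omega y s sigma yhat v -> vstar <= v) /\
  IsMin (fun c => exists m, inMy Omega y ystar m /\ c = match_cost Omega y s m)
        (match_cost Omega y s mstar) /\
  inMy Omega y ystar mstar.
Proof.
  intros ystar; destruct Hm_in as [y0 [_ Hm0]].
  assert (Hystar : inYhat Omega y ystar) by exact (card1_fL HOmega Hm0).
  assert (Hmstar : inMy Omega y ystar mstar) by exact (inMy_fL Hm0).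
  assert (Hjoint : forall yhat m, inYhat Omega y yhat -> inMy Omega y yhat m ->
            match_cost Omega y s mstar + bce Omega sigma ystar <=
            match_cost Omega y s m + bce Omega sigma yhat).
  { intros yhat m Hyhat Hm.
    pose proof (Hm_min m (ex_intro _ yhat (conj Hyhat Hm))) as HG.
    rewrite (Gcost_split HOmega s sigma Hystar Hmstar),
            (Gcost_split HOmega s sigma Hyhat Hm) in HG; lra. }
  assert (Hcost : IsMin (fun c => exists m, inMy Omega y ystar m /\ c = match_cost Omega y s m)
                        (match_cost Omega y s mstar)).
  { split; [now exists mstar|].
    intros c [m [Hm ->]]; pose proof (Hjoint ystar m Hystar Hm); lra. }
  split; [exact Hystar|]; split; [|split; assumption].
  exists (match_cost Omega y s mstar + bce Omega sigma ystar); split.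
  - unfold Fval; replace (_ + _ - _) with (match_cost Omega y s mstar) by ring; exact Hcost.
  - intros yhat v Hyhat [[m [Hm Ev]] _]; pose proof (Hjoint yhat m Hyhat Hm); lra.
Qed.
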